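(* A non-empty graph $T$ is a $\mathsf{TJ}_n$-graph for infinitely many integers $n$ if and only if there exists an integer $k$ such that $T$ is a maximum $\mathsf{TJ}_k$-graph.
   Context: Graphs are finite, simple, undirected; non-empty means having at least one vertex. $\mathsf{TJ}_k(G)$ is the graph on the cliques of $G$ of size $k$ where $C, C'$ are adjacent iff $|C \setminus C'| = |C' \setminus C| = 1$. $T$ is a $\mathsf{TJ}_k$-graph if $T \cong \mathsf{TJ}_k(G)$ for some graph $G$, and a maximum $\mathsf{TJ}_k$-graph if $T \cong \mathsf{TJ}_k(G)$ for some $G$ with $\omega(G) = k$ ($\omega$ = maximum clique size). *)

From mathcomp Require Import all_boot.
Set Implicit Arguments. Unset Strict Implicit. Unset Printing Implicit Defensive.

Record sgraph := SGraph {
  svert : finType;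
  sadj : rel svert;
  sadj_sym : symmetric sadj;
  sadj_irr : irreflexive sadj }.

Definition clique (G : sgraph) (C : {set svert G}) : bool :=
  [forall x in C, forall y in C, (x != y) ==> sadj x y].

Definition kclique (G : sgraph) (k : nat) (C : {set svert G}) : bool :=
  clique C && (#|C| == k).

Definition tj_vert (G : sgraph) (k : nat) : finType :=
  {C : {set svert G} | kclique k C}.

Definition tj_adj (G : sgraph) (k : nat) : rel (tj_vert G k) :=
  fun C C' => (#|val C :\: val C'| == 1) && (#|val C' :\: val C| == 1).

Definition gr_iso (V1 V2 : finType) (e1 : rel V1) (e2 : rel V2) : Prop :=
  exists f : V1 -> V2, bijective f /\ forall x y, e2 (f x) (f y) = e1 x y.

Definition clique_number_is (G : sgraph) (k : nat) : Prop :=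
  (exists C : {set svert G}, kclique k C) /\
  (forall C : {set svert G}, clique C -> #|C| <= k).

Definition is_TJ (T : sgraph) (k : nat) : Prop :=
  exists G : sgraph, gr_iso (@sadj T) (@tj_adj G k).

Definition is_max_TJ (T : sgraph) (k : nat) : Prop :=
  exists G : sgraph, clique_number_is G k /\ gr_iso (@sadj T) (@tj_adj G k).

From mathcomp Require Import all_boot.
Set Implicit Arguments. Unset Strict Implicit. Unset Printing Implicit Defensive.

(* If T is isomorphic to TJ_n(G) with n >= |T|, then G has no clique of size
   n + 1: such a clique contains n + 1 distinct n-cliques, more than |T|.  Hence
   omega(G) = n.  Conversely, if omega(G) = k, then every (k + m)-clique of the
   join of G with K_m contains all of K_m, so adding the vertices of K_m to a
   k-clique is an isomorphism from TJ_k(G) onto TJ_(k+m)(G + K_m), for every m. *)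

Lemma ex_subset_card (T : finType) (A : {set T}) j :
  j <= #|A| -> exists2 B : {set T}, B \subset A & #|B| = j.
Proof.
elim: j => [|j IHj] le_jA; first by exists set0; rewrite ?sub0set ?cards0.
have [B sBA cardB] := IHj (ltnW le_jA).
have /card_gt0P [x] : 0 < #|A :\: B| by rewrite cardsD (setIidPr sBA) cardB subn_gt0.
rewrite inE => /andP [xNB xA].
by exists (x |: B); rewrite ?subUset ?sub1set ?xA ?sBA // cardsU1 xNB cardB.
Qed.

Lemma inr_in_imset_inl (T1 T2 : finType) (A : {set T1}) (i : T2) :
  (inr i \in [set inl a | a in A]) = false.
Proof. by apply/negbTE/negP => /imsetP []. Qed.

Lemma inl_in_imset_inr (T1 T2 : finType) (A : {set T2}) (a : T1) :
  (inl a \in [set inr i | i in A]) = false.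
Proof. by apply/negbTE/negP => /imsetP []. Qed.

Lemma gr_iso_card (V1 V2 : finType) (e1 : rel V1) (e2 : rel V2) :
  gr_iso e1 e2 -> #|V1| = #|V2|.
Proof. by case=> f [/bij_eq_card]. Qed.

Lemma gr_iso_trans (V1 V2 V3 : finType) (e1 : rel V1) (e2 : rel V2) (e3 : rel V3) :
  gr_iso e1 e2 -> gr_iso e2 e3 -> gr_iso e1 e3.
Proof.
move=> [f [bij_f adj_f]] [g [bij_g adj_g]].
by exists (g \o f); split => [|x y]; [exact: bij_comp | rewrite /= adj_g adj_f].
Qed.

Section Cliques.
Variable G : sgraph.
Implicit Types (A B C : {set svert G}).

Lemma cliqueP C : reflect {in C &, forall x y, x != y -> sadj x y} (clique C).
Proof.
apply: (iffP forall_inP) => [cC x y xC yC | cC x xC].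
  exact/implyP/(forall_inP (cC x xC)).
by apply/forall_inP => y yC; apply/implyP; apply: cC.
Qed.

Lemma cliqueS A B : B \subset A -> clique A -> clique B.
Proof.
move=> /subsetP sBA /cliqueP cA; apply/cliqueP => x y xB yB.
exact: cA (sBA x xB) (sBA y yB).
Qed.

Lemma card_tj_vert_gt n C : clique C -> n < #|C| -> n < #|tj_vert G n|.
Proof.
move=> cC /ex_subset_card [B sBC cardB].
have cB := cliqueS sBC cC.
have inj_del : {in B &, injective (fun x => B :\ x)}.
  move=> x y xB yB /setP /(_ x); rewrite !inE eqxx xB andbT.
  by case: eqVneq.
rewrite card_sig -cardB -(card_in_imset inj_del); apply: subset_leq_card.
apply/subsetP => _ /imsetP [x xB ->]; rewrite inE /kclique (cliqueS (subD1set B x) cB).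
by move: cardB; rewrite (cardsD1 x B) xB add1n => -[->]; rewrite eqxx.
Qed.

Lemma clique_number_tj n : 0 < #|tj_vert G n| <= n -> clique_number_is G n.
Proof.
case/andP=> /card_gt0P [C _] le_tj_n; split; first by exists (val C); apply: valP.
move=> D cD; rewrite leqNgt; apply/negP => /(card_tj_vert_gt cD).
by rewrite ltnNge le_tj_n.
Qed.

End Cliques.

Section JoinComplete.
Variables (G : sgraph) (m : nat).

Definition join_complete_adj : rel (svert G + 'I_m) := fun x y =>
  match x, y with
  | inl a, inl b => sadj a b
  | inr i, inr j => i != j
  | _, _ => true
  end.

Lemma join_complete_adj_sym : symmetric join_complete_adj.
Proof. by case=> [a|i] [b|j] //=; [apply: sadj_sym | rewrite eq_sym]. Qed.

Lemma join_complete_adj_irr : irreflexive join_complete_adj.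
Proof. by case=> [a|i] /=; rewrite ?sadj_irr ?eqxx. Qed.

Definition join_complete : sgraph := SGraph join_complete_adj_sym join_complete_adj_irr.

Implicit Types (C : {set svert G}) (D : {set svert join_complete}).

Definition extend C : {set svert join_complete} := inl @: C :|: inr @: [set: 'I_m].

Definition restrict D : {set svert G} := inl @^-1: D.

Lemma in_extend_inl C a : (inl a \in extend C) = (a \in C).
Proof. by rewrite in_setU inl_in_imset_inr orbF (mem_imset _ _ inl_inj). Qed.

Lemma in_extend_inr C i : inr i \in extend C.
Proof. by rewrite in_setU imset_f ?orbT. Qed.

Lemma extendK : cancel extend restrict.
Proof. by move=> C; apply/setP => a; rewrite inE in_extend_inl. Qed.

Lemma card_extend C : #|extend C| = #|C| + m.
Proof.
have disjoint_parts : inl @: C :&: inr @: [set: 'I_m] = set0.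
  by apply/setP => -[a|i]; rewrite !inE ?inl_in_imset_inr ?inr_in_imset_inl ?andbF.
rewrite /extend cardsU disjoint_parts cards0 subn0.
by rewrite (card_imset _ inl_inj) (card_imset _ inr_inj) cardsT card_ord.
Qed.

Lemma extendD C C' : extend C :\: extend C' = inl @: (C :\: C').
Proof.
apply/setP => -[a|i]; rewrite in_setD ?in_extend_inl ?in_extend_inr.
  by rewrite (mem_imset _ _ inl_inj) inE.
by rewrite inr_in_imset_inl.
Qed.

Lemma card_extendD C C' : #|extend C :\: extend C'| = #|C :\: C'|.
Proof. by rewrite extendD (card_imset _ inl_inj). Qed.

Lemma clique_extend C : clique C -> clique (extend C).
Proof.
move=> /cliqueP cC; apply/cliqueP => -[a|i] [b|j] //.
by rewrite !in_extend_inl; apply: cC.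
Qed.

Lemma clique_restrict D : clique D -> clique (restrict D).
Proof. by move=> /cliqueP cD; apply/cliqueP => a b; rewrite !inE; apply: cD. Qed.

Lemma kclique_extend k C : kclique k C -> kclique (k + m) (extend C).
Proof.
by case/andP => cC /eqP cardC; rewrite /kclique clique_extend // card_extend cardC eqxx.
Qed.

Variable k : nat.
Hypothesis clique_le_k : forall C, clique C -> #|C| <= k.

Lemma extend_restrict D : kclique (k + m) D -> extend (restrict D) = D.
Proof.
case/andP => cD /eqP cardD; apply/esym/eqP; rewrite eqEcard card_extend cardD.
rewrite leq_add2r clique_le_k ?clique_restrict // andbT.
by apply/subsetP => -[a|i]; rewrite ?in_extend_inl ?in_extend_inr ?inE.
Qed.

Lemma kclique_restrict D : kclique (k + m) D -> kclique k (restrict D).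
Proof.
move=> kD; have eD := extend_restrict kD; case/andP: kD => cD /eqP cardD.
by rewrite /kclique clique_restrict // -(eqn_add2r m) -card_extend eD cardD eqxx.
Qed.

Lemma gr_iso_tj_join_complete : gr_iso (@tj_adj G k) (@tj_adj join_complete (k + m)).
Proof.
pose f (C : tj_vert G k) : tj_vert join_complete (k + m) :=
  exist _ (extend (val C)) (kclique_extend (valP C)).
pose g (D : tj_vert join_complete (k + m)) : tj_vert G k :=
  exist _ (restrict (val D)) (kclique_restrict (valP D)).
exists f; split => [|C C']; last by rewrite /tj_adj /= !card_extendD.
by exists g => [C|D]; apply: val_inj; rewrite /= ?extendK ?extend_restrict ?(valP D).
Qed.

End JoinComplete.

Theorem corollary4p14 (T : sgraph) :
  0 < #|svert T| ->
  ((forall m : nat, exists n : nat, m <= n /\ is_TJ T n) <->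
   (exists k : nat, is_max_TJ T k)).
Proof.
move=> T_gt0; split => [TJ_unbounded | [k [G [[_ clique_le_k] isoT]]] m].
- have [n [le_Tn [G isoT]]] := TJ_unbounded #|svert T|.
  exists n, G; split => //; apply: clique_number_tj.
  by rewrite -(gr_iso_card isoT) T_gt0.
- exists (k + m); split; first exact: leq_addl.
  exists (join_complete G m).
  exact: gr_iso_trans isoT (gr_iso_tj_join_complete m clique_le_k).
Qed.
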